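(* Let $r$ be a non-negative integer. If $r\neq 0$, then $$\sum_{k = 1}^\infty \frac{(-1)^{k(r-1)} \big(\frac{27}{5}\big)^k}{k^2\binom{3k}k F_r^{2k} } = 6\arctan^2 \bigg(\frac{\sqrt 3 }{2\sqrt[3]{\alpha^{2r}} + (-1)^{r}} \bigg) - \frac{1}{2}\log ^2 \bigg( \frac{\sqrt 5\,\alpha ^r F_r }{\big(\sqrt[3]{\alpha^{2r}} - ( - 1)^{r} \big)^3 } \bigg),$$ and if $r\neq 1$, then $$\sum_{k = 1}^\infty \frac{( - 1)^{kr} 27^k }{k^2 \binom{3k}k L_r^{2k} } = 6\arctan ^2 \bigg( \frac{ \sqrt 3 }{2\sqrt[3]{\alpha^{2r}} - ( - 1)^r } \bigg) - \frac{1}{2}\log ^2\bigg( \frac{\alpha ^r L_r }{\big(\sqrt[3]{\alpha^{2r}} + ( - 1)^r \big)^3 } \bigg).$$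
   Context: $F_n$ and $L_n$ are the Fibonacci and Lucas numbers: $F_0=0$, $F_1=1$, $L_0=2$, $L_1=1$, and $X_n=X_{n-1}+X_{n-2}$ for both sequences. $\alpha=(1+\sqrt5)/2$ is the golden ratio. $\sqrt[3]{t}$ denotes the real cube root. *)

From Stdlib Require Import Reals.
From Coquelicot Require Import Coquelicot.
Open Scope R_scope.

Fixpoint fib (n : nat) : nat :=
  match n with
  | O => 0%nat
  | S m => match m with
           | O => 1%nat
           | S p => (fib m + fib p)%nat
           end
  end.

Fixpoint lucas (n : nat) : nat :=
  match n with
  | O => 2%nat
  | S m => match m with
           | O => 1%nat
           | S p => (lucas m + lucas p)%nat
           end
  end.

Definition alpha : R := (1 + sqrt 5) / 2.

Definition cbrt (t : R) : R :=
  if Rlt_dec 0 t then Rpower t (1/3)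
  else if Rlt_dec t 0 then - Rpower (- t) (1/3) else 0.

(* Let [g y = sum_(k >= 1) y^k / (k^2 C(3k,k))].  The Beta integral
   [(k-1)! (2k)! / (3k)! = int_0^1 t^(k-1) (1-t)^(2k) dt] turns [g'] into a geometric
   series under the integral sign:
     [g' y = int_0^1 (1-t)^2 / (1 - y t (1-t)^2) dt]   for [|y| < 27/4].
   Along [y = 27 u^3 / (1+u^3)^2] the denominator splits into a linear and a quadratic
   factor in [t], so [d/du g(y(u))] is elementary; integrating in [u] from [0] gives
     [g (27 u^3 / (1+u^3)^2) = 6 atan^2 (sqrt 3 u / (2-u)) - 1/2 ln^2 ((1-u+u^2)/(1+u)^2)]
   for [-11/20 < u < 1], and, the coefficients being positive, also at [u = 1], i.e.
   [y = 27/4].  By Binet's formulas, [u = -(-1)^r alpha^(-2r/3)] gives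
   [y = (-1)^(r-1) 27 / (5 F_r^2)] and [u = (-1)^r alpha^(-2r/3)] gives
   [y = (-1)^r 27 / L_r^2]. *)

From Stdlib Require Import Reals Factorial Lra Lia Psatz.
From Coquelicot Require Import Coquelicot.
Open Scope R_scope.

Lemma is_RInt_plus_R (f g : R -> R) (a b If Ig : R) :
  is_RInt f a b If -> is_RInt g a b Ig -> is_RInt (fun t => f t + g t) a b (If + Ig).
Proof. apply (is_RInt_plus (V := R_NormedModule)). Qed.

Lemma is_RInt_scal_R (f : R -> R) (a b k If : R) :
  is_RInt f a b If -> is_RInt (fun t => k * f t) a b (k * If).
Proof. apply (is_RInt_scal (V := R_NormedModule)). Qed.

Lemma is_RInt_derive_R (f df : R -> R) (a b : R) :
  (forall x, Rmin a b <= x <= Rmax a b -> is_derive f x (df x)) ->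
  (forall x, Rmin a b <= x <= Rmax a b -> continuous df x) ->
  is_RInt df a b (f b - f a).
Proof. apply (is_RInt_derive (V := R_CompleteNormedModule)). Qed.

Lemma is_RInt_ext_R (f g : R -> R) (a b l : R) :
  (forall x, Rmin a b < x < Rmax a b -> f x = g x) -> is_RInt f a b l -> is_RInt g a b l.
Proof. apply (is_RInt_ext (V := R_NormedModule)). Qed.

Lemma is_RInt_eq (f : R -> R) (a b l l' : R) : is_RInt f a b l -> l = l' -> is_RInt f a b l'.
Proof. now intros H <-. Qed.

Lemma ex_derive_continuous_R (f : R -> R) (x : R) : ex_derive f x -> continuous f x.
Proof. apply (ex_derive_continuous (V := R_NormedModule)). Qed.

Lemma is_derive_plus_R (f g : R -> R) (x df dg : R) :
  is_derive f x df -> is_derive g x dg -> is_derive (fun y => f y + g y) x (df + dg).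
Proof. apply (is_derive_plus (V := R_NormedModule)). Qed.

Lemma is_derive_minus_R (f g : R -> R) (x df dg : R) :
  is_derive f x df -> is_derive g x dg -> is_derive (fun y => f y - g y) x (df - dg).
Proof. apply (is_derive_minus (V := R_NormedModule)). Qed.

Lemma sum_n_Sn_R (a : nat -> R) (n : nat) : sum_n a (S n) = sum_n a n + a (S n).
Proof. exact (sum_Sn a n). Qed.

Lemma sum_n_O_R (a : nat -> R) : sum_n a 0 = a 0%nat.
Proof. exact (sum_O a). Qed.

Lemma INR_S_neq0 (n : nat) : INR n + 1 <> 0.
Proof. generalize (pos_INR n); lra. Qed.

Lemma INR_fact_neq0 (n : nat) : INR (fact n) <> 0.
Proof. apply not_0_INR, fact_neq_0. Qed.

(* Goals produced through Coquelicot's hierarchy are equalities in a structure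
   whose carrier is only convertibly [R], which [ring] and [field] do not see. *)
Ltac R_eq := match goal with |- @eq _ ?x ?y => change (@eq R x y) end.

(* [auto_derive] writes [INR (S n)] unfolded as a match on [n]. *)
Ltac fold_INR_S :=
  repeat match goal with
  | |- context [match ?n with 0%nat => 1 | S _ => INR ?n + 1 end] =>
      change (match n with 0%nat => 1 | S _ => INR n + 1 end) with (INR (S n))
  end; rewrite ?S_INR.

(** * The derivative of the series as an integral *)

(* Integration by parts: [(a+1) B(a, b+1) = (b+1) B(a+1, b)]. *)
Lemma is_RInt_beta (b a : nat) :
  is_RInt (fun t => t ^ a * (1 - t) ^ b) 0 1
    (INR (fact a) * INR (fact b) / INR (fact (a + b + 1))).
Proof.
  revert a; induction b as [|b IH]; intros a.
  - eapply is_RInt_eq.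
    + apply (is_RInt_derive_R (fun t => t ^ S a / (INR a + 1))).
      * intros x _. auto_derive; [easy|]. fold_INR_S. field. apply INR_S_neq0.
      * intros x _. apply ex_derive_continuous_R. auto_derive. easy.
    + rewrite Nat.add_0_r, Nat.add_1_r, pow1, pow_i by lia.
      rewrite fact_simpl, mult_INR, S_INR. simpl.
      field. split; [apply INR_fact_neq0 | apply INR_S_neq0].
  - assert (Hparts : is_RInt
       (fun t => (INR a + 1) * (t ^ a * (1 - t) ^ S b) - (INR b + 1) * (t ^ S a * (1 - t) ^ b))
       0 1 (1 ^ S a * (1 - 1) ^ S b - 0 ^ S a * (1 - 0) ^ S b)).
    { apply (is_RInt_derive_R (fun t => t ^ S a * (1 - t) ^ S b)).
      - intros x _. auto_derive; [easy|]. fold_INR_S. R_eq. simpl.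
        (* [ring] would see [(1 - x) ^ b] and [(1 + - x) ^ b] as distinct atoms. *)
        unfold Rminus. ring.
      - intros x _. apply ex_derive_continuous_R. auto_derive. easy. }
    assert (H := is_RInt_scal_R _ _ _ (/ (INR a + 1)) _
                   (is_RInt_plus_R _ _ _ _ _ _ Hparts
                      (is_RInt_scal_R _ _ _ (INR b + 1) _ (IH (S a))))).
    eapply is_RInt_eq; [eapply is_RInt_ext_R; [|exact H]|].
    + intros x _. cbv beta. field. apply INR_S_neq0.
    + rewrite Rminus_diag, pow1, !pow_i by lia.
      replace (S a + b + 1)%nat with (a + S b + 1)%nat by lia.
      rewrite (fact_simpl a), (fact_simpl b), !mult_INR, !S_INR.
      field. split; [apply INR_fact_neq0 | apply INR_S_neq0].
Qed.

Definition binom3 (n : nat) : R := Binomial.C (3 * n) n.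

(* [coef 0 = 0] so that [PSeries coef y] is the sum over [k >= 1]. *)
Definition coef (n : nat) : R :=
  match n with O => 0 | S _ => / (INR n ^ 2 * binom3 n) end.

Lemma binom3_fact (n : nat) :
  binom3 n = INR (fact (3 * n)) / (INR (fact n) * INR (fact (2 * n))).
Proof.
  unfold binom3, Binomial.C. now replace (3 * n - n)%nat with (2 * n)%nat by lia.
Qed.

Lemma binom3_pos (n : nat) : 0 < binom3 n.
Proof.
  rewrite binom3_fact.
  apply Rdiv_lt_0_compat; [|apply Rmult_lt_0_compat]; apply lt_0_INR, lt_O_fact.
Qed.

Lemma coef_denom_pos (n : nat) : 0 < INR (S n) ^ 2 * binom3 (S n).
Proof.
  apply Rmult_lt_0_compat; [|apply binom3_pos].
  apply pow_lt, lt_0_INR; lia.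
Qed.

Lemma coef_nonneg (n : nat) : 0 <= coef n.
Proof.
  destruct n as [|n]; [simpl; lra|].
  apply Rlt_le, Rinv_0_lt_compat, coef_denom_pos.
Qed.

Lemma PS_derive_coef (n : nat) :
  PS_derive coef n = INR (fact n) * INR (fact (2 * n + 2)) / INR (fact (n + (2 * n + 2) + 1)).
Proof.
  unfold PS_derive, coef. rewrite binom3_fact.
  replace (3 * S n)%nat with (n + (2 * n + 2) + 1)%nat by lia.
  replace (2 * S n)%nat with (2 * n + 2)%nat by lia.
  rewrite (fact_simpl n), mult_INR.
  assert (INR (S n) <> 0) by (apply not_0_INR; lia).
  field. repeat split; try apply INR_fact_neq0; auto.
Qed.

Lemma PS_derive_coef_nonneg (n : nat) : 0 <= PS_derive coef n.
Proof. apply Rmult_le_pos; [apply pos_INR | apply coef_nonneg]. Qed.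

Definition Phi (y : R) : R := RInt (fun t => (1 - t) ^ 2 / (1 - y * t * (1 - t) ^ 2)) 0 1.

Lemma kernel_bound (t : R) : 0 <= t <= 1 -> 0 <= t * (1 - t) ^ 2 <= 4 / 27.
Proof.
  intros Ht. split; [apply Rmult_le_pos; [lra | apply pow2_ge_0]|].
  assert (0 <= (3 * t - 1) ^ 2 * (4 - 3 * t)) by (apply Rmult_le_pos; [apply pow2_ge_0 | lra]).
  nra.
Qed.

Lemma Rabs_kernel_le (y t : R) : 0 <= t <= 1 -> Rabs (y * t * (1 - t) ^ 2) <= Rabs y * 4 / 27.
Proof.
  intros Ht. destruct (kernel_bound t Ht).
  rewrite Rmult_assoc, Rabs_mult, (Rabs_right (t * (1 - t) ^ 2)) by lra.
  generalize (Rabs_pos y); nra.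
Qed.

Lemma Phi_denom_ge (y t : R) : 0 <= t <= 1 -> 1 - Rabs y * 4 / 27 <= 1 - y * t * (1 - t) ^ 2.
Proof.
  intros Ht. generalize (Rabs_kernel_le y t Ht). intros H.
  apply Rabs_le_between in H. lra.
Qed.

Lemma Phi_denom_pos (y t : R) : Rabs y < 27 / 4 -> 0 <= t <= 1 -> 0 < 1 - y * t * (1 - t) ^ 2.
Proof. intros Hy Ht. generalize (Phi_denom_ge y t Ht). lra. Qed.

Lemma is_RInt_Phi (y : R) :
  Rabs y < 27 / 4 -> is_RInt (fun t => (1 - t) ^ 2 / (1 - y * t * (1 - t) ^ 2)) 0 1 (Phi y).
Proof.
  intros Hy. apply (RInt_correct (V := R_CompleteNormedModule)).
  apply (ex_RInt_continuous (V := R_CompleteNormedModule)). intros t Ht.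
  rewrite Rmin_left, Rmax_right in Ht by lra.
  apply ex_derive_continuous_R. auto_derive. generalize (Phi_denom_pos y t Hy Ht). lra.
Qed.

Lemma is_RInt_partial_sum (y : R) (N : nat) :
  is_RInt (fun t => sum_n (fun n => y ^ n * (t ^ n * (1 - t) ^ (2 * n + 2))) N) 0 1
    (sum_n (fun n => PS_derive coef n * y ^ n) N).
Proof.
  assert (Hterm : forall n, is_RInt (fun t => y ^ n * (t ^ n * (1 - t) ^ (2 * n + 2))) 0 1
                              (PS_derive coef n * y ^ n)).
  { intros n. eapply is_RInt_eq; [apply is_RInt_scal_R, is_RInt_beta|].
    rewrite PS_derive_coef. ring. }
  induction N as [|N IH].
  - rewrite sum_n_O_R. eapply is_RInt_ext_R; [|apply Hterm].
    intros. now rewrite sum_n_O_R.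
  - rewrite sum_n_Sn_R. eapply is_RInt_ext_R; [|apply is_RInt_plus_R; [exact IH | apply Hterm]].
    intros. now rewrite sum_n_Sn_R.
Qed.

Lemma partial_sum_geom (y t : R) (N : nat) : 1 - y * t * (1 - t) ^ 2 <> 0 ->
  sum_n (fun n => y ^ n * (t ^ n * (1 - t) ^ (2 * n + 2))) N =
  (1 - t) ^ 2 * (1 - (y * t * (1 - t) ^ 2) ^ S N) / (1 - y * t * (1 - t) ^ 2).
Proof.
  intros Hz. set (z := y * t * (1 - t) ^ 2) in *.
  assert (Hn : forall n, y ^ n * (t ^ n * (1 - t) ^ (2 * n + 2)) = (1 - t) ^ 2 * z ^ n).
  { intros n. unfold z. rewrite pow_add, pow_mult, !Rpow_mult_distr. ring. }
  induction N as [|N IH].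
  - rewrite sum_n_O_R, Hn. simpl. field. exact Hz.
  - rewrite sum_n_Sn_R, IH, Hn. simpl. field. exact Hz.
Qed.

Lemma Phi_partial_sum_error (y : R) (N : nat) : Rabs y < 27 / 4 ->
  Rabs (sum_n (fun n => PS_derive coef n * y ^ n) N - Phi y)
  <= (Rabs y * 4 / 27) ^ S N / (1 - Rabs y * 4 / 27).
Proof.
  intros Hy. set (rho := Rabs y * 4 / 27).
  assert (Hrho : 0 <= rho < 1) by (unfold rho; generalize (Rabs_pos y); lra).
  set (z := fun t => y * t * (1 - t) ^ 2).
  assert (Hrem : is_RInt (fun t => (1 - t) ^ 2 * z t ^ S N / (1 - z t)) 0 1
                   (Phi y + -1 * sum_n (fun n => PS_derive coef n * y ^ n) N)).
  { eapply is_RInt_ext_R;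
      [|exact (is_RInt_plus_R _ _ _ _ _ _ (is_RInt_Phi y Hy)
                 (is_RInt_scal_R _ _ _ (-1) _ (is_RInt_partial_sum y N)))].
    intros t Ht. rewrite Rmin_left, Rmax_right in Ht by lra.
    assert (Hd := Phi_denom_pos y t Hy (conj (Rlt_le _ _ (proj1 Ht)) (Rlt_le _ _ (proj2 Ht)))).
    cbv beta. R_eq. rewrite partial_sum_geom by lra. unfold z. field. lra. }
  rewrite Rabs_minus_sym.
  replace (rho ^ S N / (1 - rho)) with ((1 - 0) * (rho ^ S N / (1 - rho))) by ring.
  replace (Phi y - _) with (RInt (fun t => (1 - t) ^ 2 * z t ^ S N / (1 - z t)) 0 1)
    by (rewrite (is_RInt_unique _ _ _ _ Hrem); R_eq; ring).
  apply abs_RInt_le_const; [lra | eexists; exact Hrem|].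
  intros t Ht.
  assert (Hz : Rabs (z t) <= rho) by apply Rabs_kernel_le, Ht.
  assert (Hd : 1 - rho <= 1 - z t) by apply Phi_denom_ge, Ht.
  assert (H1t : 0 <= (1 - t) ^ 2 <= 1) by (split; [apply pow2_ge_0 | nra]).
  unfold Rdiv. rewrite !Rabs_mult, Rabs_inv, (Rabs_right ((1 - t) ^ 2)),
    (Rabs_right (1 - z t)), <- RPow_abs by lra.
  assert (Hpow : 0 <= Rabs (z t) ^ S N <= rho ^ S N)
    by (split; [apply pow_le, Rabs_pos | apply pow_incr; split; [apply Rabs_pos | exact Hz]]).
  assert (Hinv : 0 < / (1 - z t) <= / (1 - rho))
    by (split; [apply Rinv_0_lt_compat | apply Rinv_le_contravar]; lra).
  assert (0 <= rho ^ S N) by (apply pow_le; lra).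
  apply Rle_trans with (1 * rho ^ S N * / (1 - rho)); [|lra].
  apply Rmult_le_compat; try nra.
Qed.

Lemma is_series_Phi (y : R) :
  Rabs y < 27 / 4 -> is_series (fun n => PS_derive coef n * y ^ n) (Phi y).
Proof.
  intros Hy. set (rho := Rabs y * 4 / 27).
  assert (Hrho : 0 <= rho < 1) by (unfold rho; generalize (Rabs_pos y); lra).
  assert (Herr : is_lim_seq (fun N => rho ^ S N / (1 - rho)) 0).
  { assert (Hgeom : is_lim_seq (fun N => rho ^ N) 0)
      by (apply is_lim_seq_geom; rewrite Rabs_right; lra).
    apply (is_lim_seq_scal_l _ (/ (1 - rho))), is_lim_seq_incr_1 in Hgeom.
    replace (Finite 0) with (Rbar_mult (/ (1 - rho)) 0) by (simpl; f_equal; ring).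
    eapply is_lim_seq_ext; [|exact Hgeom].
    intros n. simpl. unfold Rdiv. ring. }
  enough (H : is_lim_seq (sum_n (fun n => PS_derive coef n * y ^ n)) (Phi y)) by exact H.
  apply is_lim_seq_le_le with (u := fun N => Phi y - rho ^ S N / (1 - rho))
                              (w := fun N => Phi y + rho ^ S N / (1 - rho)).
  - intros N. generalize (Phi_partial_sum_error y N Hy). fold rho. intros H.
    apply Rabs_le_between in H. lra.
  - replace (Finite (Phi y)) with (Rbar_minus (Phi y) 0) by (simpl; f_equal; ring).
    apply is_lim_seq_minus'; [apply is_lim_seq_const | exact Herr].
  - replace (Finite (Phi y)) with (Rbar_plus (Phi y) 0) by (simpl; f_equal; ring).
    apply is_lim_seq_plus'; [apply is_lim_seq_const | exact Herr].
Qed.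

Lemma is_series_nonneg_sum_n_le (a : nat -> R) (l : R) :
  (forall n, 0 <= a n) -> is_series a l -> forall N, sum_n a N <= l.
Proof.
  intros Ha Hs N. apply (is_lim_seq_incr_compare (sum_n a) l); [exact Hs|].
  intros n. rewrite sum_n_Sn_R. specialize (Ha (S n)). lra.
Qed.

Lemma is_series_nonneg_term_le (a : nat -> R) (l : R) :
  (forall n, 0 <= a n) -> is_series a l -> forall n, a n <= l.
Proof.
  intros Ha Hs n. apply Rle_trans with (sum_n a n);
    [|now apply is_series_nonneg_sum_n_le].
  assert (Hpos : forall N, 0 <= sum_n a N).
  { induction N as [|N IH]; [rewrite sum_n_O_R; apply Ha|].
    rewrite sum_n_Sn_R. generalize (Ha (S N)). lra. }
  destruct n as [|n]; [rewrite sum_n_O_R; lra|].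
  rewrite sum_n_Sn_R. generalize (Hpos n). lra.
Qed.

(* The differentiated series converges on [(-27/4, 27/4)], and differentiation
   does not change the radius. *)
Lemma CV_radius_coef : Rbar_le (27 / 4) (CV_radius coef).
Proof.
  rewrite <- CV_radius_derive.
  destruct (CV_radius_bounded (PS_derive coef)) as [Hub _].
  assert (Hin : forall y, 0 <= y < 27 / 4 -> Rbar_le y (CV_radius (PS_derive coef))).
  { intros y Hy. apply Hub. exists (Phi y). intros n.
    assert (Ht : forall k, 0 <= PS_derive coef k * y ^ k)
      by (intros k; apply Rmult_le_pos; [apply PS_derive_coef_nonneg | apply pow_le; lra]).
    rewrite Rabs_right by (apply Rle_ge, Ht).
    apply (is_series_nonneg_term_le (fun k => PS_derive coef k * y ^ k)); [exact Ht|].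
    apply is_series_Phi. rewrite Rabs_right; lra. }
  generalize (CV_radius_ge_0 (PS_derive coef)).
  destruct (CV_radius (PS_derive coef)) as [R| |]; simpl; auto; intros HR.
  apply Rnot_lt_le. intros Hlt.
  specialize (Hin ((R + 27 / 4) / 2) ltac:(lra)). simpl in Hin. lra.
Qed.

Lemma is_derive_PSeries_coef (y : R) :
  Rabs y < 27 / 4 -> is_derive (PSeries coef) y (Phi y).
Proof.
  intros Hy. rewrite <- (is_series_unique _ _ (is_series_Phi y Hy)).
  apply is_derive_PSeries. eapply Rbar_lt_le_trans; [|apply CV_radius_coef]. exact Hy.
Qed.

(** * The parametrization [y = 27 u^3 / (1 + u^3)^2] *)

Lemma sqrt3_sqrt3 : sqrt 3 * sqrt 3 = 3.
Proof. apply sqrt_sqrt; lra. Qed.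

Lemma sqrt3_pos : 0 < sqrt 3.
Proof. apply sqrt_lt_R0; lra. Qed.

Lemma three_sq_plus_sq_pos (A B : R) : B <> 0 -> 0 < 3 * B ^ 2 + A ^ 2.
Proof. intros HB. generalize (pow2_gt_0 B HB) (pow2_ge_0 A). lra. Qed.

Definition Psi (A B : R) : R := sqrt 3 * atan (A / (sqrt 3 * B)).

Lemma is_derive_Psi (A B : R -> R) (dA dB x : R) :
  is_derive A x dA -> is_derive B x dB -> B x <> 0 ->
  is_derive (fun y => Psi (A y) (B y)) x (3 * (dA * B x - A x * dB) / (3 * B x ^ 2 + A x ^ 2)).
Proof.
  intros HA HB HB0. unfold Psi.
  assert (Hs := sqrt3_sqrt3). assert (Hp := sqrt3_pos).
  assert (Hq := three_sq_plus_sq_pos (A x) (B x) HB0).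
  auto_derive.
  - repeat split; [now exists dA | now exists dB | apply Rmult_integral_contrapositive; lra].
  - replace (Derive (fun y => A y) x) with dA by (symmetry; now apply is_derive_unique).
    replace (Derive (fun y => B y) x) with dB by (symmetry; now apply is_derive_unique).
    set (s := sqrt 3) in *. rewrite <- Hs in Hq |- *.
    field. split; [lra | split; [lra | nra]].
Qed.

Lemma is_derive_0_const (f : R -> R) (a b : R) :
  (forall x, a < x < b -> is_derive f x 0) ->
  forall x y, a < x < b -> a < y < b -> f x = f y.
Proof.
  intros Hd x y Hx Hy.
  assert (Hin : forall z, Rmin x y <= z <= Rmax x y -> a < z < b).
  { intros z Hz. split.
    - apply Rlt_le_trans with (Rmin x y); [apply Rmin_glb_lt|]; lra.
    - apply Rle_lt_trans with (Rmax x y); [|apply Rmax_lub_lt]; lra. }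
  destruct (MVT_gen f x y (fun _ => 0)) as [c [_ E]]; [| |lra].
  - intros z Hz. apply Hd, Hin. lra.
  - intros z Hz. apply continuity_pt_filterlim, ex_derive_continuous_R.
    exists 0. apply Hd, Hin, Hz.
Qed.

Lemma Psi_diff (u : R) : -1 < u < 1 ->
  Psi (1 + 2 * u + u ^ 2) (1 - u ^ 2) - Psi (1 - 4 * u + u ^ 2) (1 - u ^ 2)
  = 3 * Psi (3 * u) (2 - u).
Proof.
  intros Hu.
  set (f := fun u => Psi (1 + 2 * u + u ^ 2) (1 - u ^ 2) - Psi (1 - 4 * u + u ^ 2) (1 - u ^ 2)
                     - 3 * Psi (3 * u) (2 - u)).
  assert (Hf0 : f 0 = 0).
  { unfold f. replace (1 + 2 * 0 + 0 ^ 2) with (1 - 4 * 0 + 0 ^ 2) by ring.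
    unfold Psi at 3. replace (3 * 0) with 0 by ring. rewrite Rdiv_0_l, atan_0. ring. }
  enough (f u = f 0) by (unfold f in *; lra).
  apply (is_derive_0_const f (-1) 1); try lra.
  intros x Hx.
  assert (B1 : 1 - x ^ 2 <> 0) by nra.
  assert (B2 : 2 - x <> 0) by lra.
  assert (H := is_derive_minus_R _ _ _ _ _
    (is_derive_minus_R _ _ _ _ _
       (is_derive_Psi (fun v => 1 + 2 * v + v ^ 2) (fun v => 1 - v ^ 2) (2 + 2 * x) (- (2 * x)) x
          ltac:(auto_derive; auto; ring) ltac:(auto_derive; auto; ring) B1)
       (is_derive_Psi (fun v => 1 - 4 * v + v ^ 2) (fun v => 1 - v ^ 2) (- 4 + 2 * x) (- (2 * x)) x
          ltac:(auto_derive; auto; ring) ltac:(auto_derive; auto; ring) B1))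
    (is_derive_scal _ _ 3 _
       (is_derive_Psi (fun v => 3 * v) (fun v => 2 - v) 3 (-1) x
          ltac:(auto_derive; auto; ring) ltac:(auto_derive; auto; ring) B2))).
  eapply is_derive_ext; [intros; reflexivity|].
  match type of H with is_derive _ _ ?l => replace 0 with l; [exact H|] end.
  R_eq. change (scal 3 ?d) with (3 * d). cbv beta.
  field. repeat split; apply Rgt_not_eq, three_sq_plus_sq_pos; auto.
Qed.

Definition X (u : R) : R := 27 * u ^ 3 / (1 + u ^ 3) ^ 2.
Definition X' (u : R) : R := 81 * u ^ 2 * (1 - u ^ 3) / (1 + u ^ 3) ^ 3.

(* For [y = X u], the denominator of the integrand of [Phi y] times [(1 + u^3)^2] factors as
   [(1 + u^3)^2 - 27 u^3 t (1-t)^2 = lin_factor u t * quad_factor u t]; [Phi_antider] comes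
   from the partial fraction decomposition. *)
Definition lin_factor (u t : R) : R := (1 + u) ^ 2 - 3 * u * t.
Definition quad_factor (u t : R) : R :=
  9 * u ^ 2 * t ^ 2 + 3 * u * (1 - 4 * u + u ^ 2) * t + (1 - u + u ^ 2) ^ 2.

Definition Phi_antider (u t : R) : R :=
  - (1 - u) / (u * (1 + u)) * ln (lin_factor u t)
  - (1 - u) * (1 + u) / (u * (1 - u + u ^ 2)) * ln (quad_factor u t)
  + 2 / (1 - u + u ^ 2) * Psi (6 * u * t + 1 - 4 * u + u ^ 2) (1 - u ^ 2).

Lemma quad_pos (u : R) : 0 < 1 - u + u ^ 2.
Proof. nra. Qed.

Lemma one_plus_cube_pos (u : R) : -1 < u -> 0 < 1 + u ^ 3.
Proof.
  intros Hu. replace (1 + u ^ 3) with ((1 + u) * (1 - u + u ^ 2)) by ring.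
  apply Rmult_lt_0_compat; [lra | apply quad_pos].
Qed.

Lemma lin_factor_pos (u t : R) : -1 < u < 1 -> 0 <= t <= 1 -> 0 < lin_factor u t.
Proof. intros. unfold lin_factor. destruct (Rle_dec 0 u); nra. Qed.

Lemma quad_factor_pos (u t : R) : -1 < u < 1 -> 0 < quad_factor u t.
Proof.
  intros Hu.
  replace (quad_factor u t) with (((6 * u * t + 1 - 4 * u + u ^ 2) ^ 2 + 3 * (1 - u ^ 2) ^ 2) / 4)
    by (unfold quad_factor; field).
  assert (0 < (1 - u ^ 2) ^ 2) by (apply pow2_gt_0; nra).
  generalize (pow2_ge_0 (6 * u * t + 1 - 4 * u + u ^ 2)). lra.
Qed.

Lemma is_derive_Phi_antider (u t : R) : -1 < u < 1 -> u <> 0 -> 0 <= t <= 1 ->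
  1 - X u * t * (1 - t) ^ 2 <> 0 ->
  is_derive (Phi_antider u) t (X' u * ((1 - t) ^ 2 / (1 - X u * t * (1 - t) ^ 2))).
Proof.
  intros Hu Hu0 Ht HX.
  assert (HP := lin_factor_pos u t Hu Ht). assert (HQ := quad_factor_pos u t Hu).
  assert (Hq := quad_pos u). assert (Hc := one_plus_cube_pos u (proj1 Hu)).
  assert (HB : 1 - u ^ 2 <> 0) by nra.
  assert (Hlog : is_derive (fun t => - (1 - u) / (u * (1 + u)) * ln (lin_factor u t)
                   - (1 - u) * (1 + u) / (u * (1 - u + u ^ 2)) * ln (quad_factor u t)) t
        (- (1 - u) / (u * (1 + u)) * (- 3 * u) / lin_factor u t
         - (1 - u) * (1 + u) / (u * (1 - u + u ^ 2))
           * (18 * u ^ 2 * t + 3 * u * (1 - 4 * u + u ^ 2))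
           / quad_factor u t)).
  { unfold lin_factor, quad_factor in *. auto_derive; [split; auto|]. field. split; lra. }
  assert (Hatan := is_derive_scal _ _ (2 / (1 - u + u ^ 2)) _
    (is_derive_Psi (fun t => 6 * u * t + 1 - 4 * u + u ^ 2) (fun _ => 1 - u ^ 2) (6 * u) 0 t
       ltac:(auto_derive; auto; ring) ltac:(auto_derive; auto; ring) HB)).
  assert (H := is_derive_plus_R _ _ _ _ _ Hlog Hatan).
  unfold Phi_antider.
  match type of H with is_derive _ _ ?l => replace (X' u * _) with l; [exact H|] end.
  change (scal ?a ?b) with (a * b). cbv beta.
  replace (3 * (1 - u ^ 2) ^ 2 + (6 * u * t + 1 - 4 * u + u ^ 2) ^ 2) with (4 * quad_factor u t)
    by (unfold quad_factor; ring).
  assert (Hden : (1 + u ^ 3) ^ 2 - 27 * u ^ 3 * t * (1 - t) ^ 2 <> 0).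
  { replace ((1 + u ^ 3) ^ 2 - 27 * u ^ 3 * t * (1 - t) ^ 2)
      with ((1 + u ^ 3) ^ 2 * (1 - X u * t * (1 - t) ^ 2)) by (unfold X; field; lra).
    apply Rmult_integral_contrapositive; split; [apply pow_nonzero; lra | exact HX]. }
  unfold X'. unfold X in HX |- *. unfold lin_factor, quad_factor in *.
  field. repeat split; lra.
Qed.

(* [X] maps [(u0, 1]] onto [(-27/4, 27/4]], where [u0^3 = 2 sqrt 2 - 3], [u0 = -0.5557...];
   [-11/20] is a convenient rational point to the right of [u0]. *)
Lemma Rabs_X_lt (u : R) : -11 / 20 < u < 1 -> Rabs (X u) < 27 / 4.
Proof.
  intros Hu. unfold X. set (v := u ^ 3).
  assert (Hv1 : v < 1) by (unfold v; nra).
  assert (Hv0 : -1331 / 8000 < v).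
  { unfold v. assert (0 < u ^ 2 - 11 / 20 * u + 121 / 400) by nra.
    replace (u ^ 3) with ((u + 11 / 20) * (u ^ 2 - 11 / 20 * u + 121 / 400) - 1331 / 8000)
      by field.
    nra. }
  assert (HD : 0 < (1 + v) ^ 2) by (apply pow2_gt_0; lra).
  apply Rabs_def1; apply Rmult_lt_reg_r with ((1 + v) ^ 2); auto;
    unfold Rdiv; rewrite Rmult_assoc, Rinv_l by lra; nra.
Qed.

Definition psi (u : R) : R := Psi (3 * u) (2 - u).
Definition ell (u : R) : R := ln ((1 - u + u ^ 2) / (1 + u) ^ 2).
Definition closed_form (u : R) : R := 2 * psi u ^ 2 - 1 / 2 * ell u ^ 2.
Definition closed_form' (u : R) : R :=
  6 * psi u / (1 - u + u ^ 2) + 3 * (1 - u) * ell u / ((1 - u + u ^ 2) * (1 + u)).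

Lemma X'_mul_Phi_X (u : R) : -11 / 20 < u < 1 -> X' u * Phi (X u) = closed_form' u.
Proof.
  intros Hu. destruct (Req_dec u 0) as [->|Hu0].
  - unfold X', closed_form', psi, ell, Psi.
    replace ((1 - 0 + 0 ^ 2) / (1 + 0) ^ 2) with 1 by field.
    rewrite Rmult_0_r, Rdiv_0_l, atan_0, ln_1. field.
  - assert (Hu' : -1 < u < 1) by lra.
    assert (HR := Rabs_X_lt u Hu).
    assert (Hint : is_RInt (fun t => X' u * ((1 - t) ^ 2 / (1 - X u * t * (1 - t) ^ 2))) 0 1
                     (Phi_antider u 1 - Phi_antider u 0)).
    { apply (is_RInt_derive_R (Phi_antider u)); intros t Ht;
        rewrite Rmin_left, Rmax_right in Ht by lra;
        assert (Hd := Phi_denom_pos _ t HR Ht).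
      - apply is_derive_Phi_antider; auto. lra.
      - apply ex_derive_continuous_R. auto_derive. lra. }
    rewrite <- (is_RInt_unique _ _ _ _ (is_RInt_scal_R _ _ _ (X' u) _ (is_RInt_Phi _ HR))),
      (is_RInt_unique _ _ _ _ Hint).
    assert (Hq := quad_pos u). assert (Hp : 0 < (1 + u) ^ 2) by (apply pow2_gt_0; lra).
    assert (Hpsi := Psi_diff u Hu').
    unfold Phi_antider, lin_factor, quad_factor, closed_form', ell.
    replace (6 * u * 1 + 1 - 4 * u + u ^ 2) with (1 + 2 * u + u ^ 2) by ring.
    replace (6 * u * 0 + 1 - 4 * u + u ^ 2) with (1 - 4 * u + u ^ 2) by ring.
    replace ((1 + u) ^ 2 - 3 * u * 1) with (1 - u + u ^ 2) by ring.
    replace ((1 + u) ^ 2 - 3 * u * 0) with ((1 + u) ^ 2) by ring.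
    replace (9 * u ^ 2 * 1 ^ 2 + 3 * u * (1 - 4 * u + u ^ 2) * 1 + (1 - u + u ^ 2) ^ 2)
      with ((1 + u) ^ 2 * (1 - u + u ^ 2)) by ring.
    replace (9 * u ^ 2 * 0 ^ 2 + 3 * u * (1 - 4 * u + u ^ 2) * 0 + (1 - u + u ^ 2) ^ 2)
      with ((1 - u + u ^ 2) * (1 - u + u ^ 2)) by ring.
    rewrite !ln_mult, ln_div by lra.
    replace (Psi (1 + 2 * u + u ^ 2) (1 - u ^ 2))
      with (Psi (1 - 4 * u + u ^ 2) (1 - u ^ 2) + 3 * psi u) by (unfold psi; lra).
    field. repeat split; lra.
Qed.

Lemma is_derive_psi (u : R) : u <> 2 -> is_derive psi u (3 / (2 * (1 - u + u ^ 2))).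
Proof.
  intros Hu. assert (Hq := quad_pos u).
  assert (H := is_derive_Psi (fun v => 3 * v) (fun v => 2 - v) 3 (-1) u
                 ltac:(auto_derive; auto; ring) ltac:(auto_derive; auto; ring) ltac:(lra)).
  cbv beta in H. replace (3 / (2 * (1 - u + u ^ 2))) with
    (3 * (3 * (2 - u) - 3 * u * -1) / (3 * (2 - u) ^ 2 + (3 * u) ^ 2)); [exact H|].
  field. split; [lra | apply Rgt_not_eq, three_sq_plus_sq_pos; lra].
Qed.

Lemma is_derive_ell (u : R) :
  -1 < u -> is_derive ell u (-3 * (1 - u) / ((1 - u + u ^ 2) * (1 + u))).
Proof.
  intros Hu. assert (Hq := quad_pos u). assert (0 < (1 + u) * ((1 + u) * 1)) by nra.
  unfold ell. auto_derive.
  - repeat split; [lra | apply Rdiv_lt_0_compat; nra].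
  - field. nra.
Qed.

Lemma is_derive_closed_form (u : R) : -1 < u < 2 -> is_derive closed_form u (closed_form' u).
Proof.
  intros Hu.
  assert (H := is_derive_minus_R _ _ _ _ _
    (is_derive_scal _ _ 2 _ (is_derive_pow _ 2 _ _ (is_derive_psi u ltac:(lra))))
    (is_derive_scal _ _ (1 / 2) _ (is_derive_pow _ 2 _ _ (is_derive_ell u (proj1 Hu))))).
  unfold closed_form.
  match type of H with is_derive _ _ ?l => replace (closed_form' u) with l; [exact H|] end.
  unfold closed_form'. simpl. assert (Hq := quad_pos u). field. lra.
Qed.

Lemma is_derive_X (u : R) : -1 < u -> is_derive X u (X' u).
Proof.
  intros Hu. assert (Hc := one_plus_cube_pos u Hu). simpl in Hc.
  unfold X, X'. auto_derive.
  - nra.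
  - field. lra.
Qed.

Lemma PSeries_coef_X (u : R) : -11 / 20 < u < 1 -> PSeries coef (X u) = closed_form u.
Proof.
  intros Hu.
  set (E := fun u => PSeries coef (X u) - closed_form u).
  assert (HE0 : E 0 = 0).
  { unfold E, closed_form, psi, ell, Psi, X.
    replace (27 * 0 ^ 3 / (1 + 0 ^ 3) ^ 2) with 0 by field.
    replace ((1 - 0 + 0 ^ 2) / (1 + 0) ^ 2) with 1 by field.
    rewrite PSeries_0, Rmult_0_r, Rdiv_0_l, atan_0, ln_1. simpl. ring. }
  enough (E u = E 0) by (unfold E in *; lra).
  apply (is_derive_0_const E (-11 / 20) 1); try lra.
  intros x Hx.
  assert (H := is_derive_minus_R _ _ _ _ _
    (is_derive_comp _ _ x _ _ (is_derive_PSeries_coef _ (Rabs_X_lt x Hx))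
       (is_derive_X x ltac:(lra)))
    (is_derive_closed_form x ltac:(lra))).
  match type of H with is_derive _ _ ?l => replace 0 with l; [exact H|] end.
  change (scal ?a ?b) with (a * b). rewrite X'_mul_Phi_X by lra. ring.
Qed.

(** * The endpoint [y = 27/4] *)

Lemma continuous_le_left (g : R -> R) (a b c : R) :
  a < b -> continuous g b -> (forall u, a < u < b -> g u <= c) -> g b <= c.
Proof.
  intros Hab Hg Hle. apply Rnot_lt_le. intros Hlt.
  assert (Heps : 0 < g b - c) by lra.
  destruct (proj1 (filterlim_locally g (g b)) Hg (mkposreal _ Heps)) as [d Hd].
  set (u := b - Rmin d (b - a) / 2).
  assert (Hm : 0 < Rmin d (b - a)) by (apply Rmin_glb_lt; [apply cond_pos | lra]).
  assert (Hu : a < u < b) by (generalize (Rmin_r d (b - a)); unfold u; lra).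
  assert (Hball : ball b d u).
  { change (Rabs (u - b) < d). rewrite Rabs_left by (unfold u; lra).
    generalize (Rmin_l d (b - a)); unfold u; lra. }
  specialize (Hd u Hball). change (Rabs (g u - g b) < g b - c) in Hd.
  apply Rabs_def2 in Hd. specialize (Hle u Hu). lra.
Qed.

(* A monotone form of Abel's theorem. *)
Lemma is_series_left_endpoint (w : R -> nat -> R) (f : R -> R) (a b : R) : a < b ->
  (forall n, continuous (fun u => w u n) b) -> continuous f b ->
  (forall u n, a < u < b -> 0 <= w u n <= w b n) ->
  (forall u, a < u < b -> is_series (w u) (f u)) ->
  is_series (w b) (f b).
Proof.
  intros Hab Hw Hf Hmono Hs.
  assert (Hmid : a < (a + b) / 2 < b) by lra.
  assert (Hb0 : forall n, 0 <= w b n) by (intros n; generalize (Hmono _ n Hmid); lra).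
  assert (Hpart : forall N, sum_n (w b) N <= f b).
  { intros N.
    assert (Hcont : continuous (fun u => sum_n (w u) N - f u) b).
    { apply (continuous_plus (V := R_NormedModule));
        [|apply (continuous_opp (V := R_NormedModule)), Hf].
      induction N as [|N IH].
      - eapply continuous_ext; [|apply (Hw 0%nat)]. intros u. now rewrite sum_n_O_R.
      - eapply continuous_ext;
          [|apply (continuous_plus (V := R_NormedModule)); [exact IH | apply Hw]].
        intros u. now rewrite sum_n_Sn_R. }
    enough (sum_n (w b) N - f b <= 0) by lra.
    apply (continuous_le_left _ a b 0 Hab Hcont).
    intros u Hu.
    generalize (is_series_nonneg_sum_n_le _ _ (fun n => proj1 (Hmono u n Hu)) (Hs u Hu) N).
    lra. }
  destruct (ex_finite_lim_seq_incr (sum_n (w b)) (f b)) as [L HL]; [|exact Hpart|].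
  { intros n. rewrite sum_n_Sn_R. generalize (Hb0 (S n)). lra. }
  assert (HLf : L <= f b) by exact (is_lim_seq_le _ _ L (f b) Hpart HL (is_lim_seq_const _)).
  assert (HfL : f b <= L).
  { apply (continuous_le_left f a b L Hab Hf).
    intros u Hu. assert (Hsu := Hs u Hu).
    refine (is_lim_seq_le (sum_n (w u)) (sum_n (w b)) (f u) L _ Hsu HL).
    intros N. induction N as [|N IH].
    - rewrite !sum_n_O_R. apply Hmono, Hu.
    - rewrite !sum_n_Sn_R. generalize (Hmono u (S N) Hu). lra. }
  replace (f b) with L by lra. exact HL.
Qed.

Lemma is_series_coef_shift (y : R) : Rabs y < 27 / 4 ->
  is_series (fun n => coef (S n) * y ^ S n) (PSeries coef y).
Proof.
  intros Hy. apply (is_series_incr_1 (V := R_NormedModule) (fun k => coef k * y ^ k)).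
  assert (Hrad : Rbar_lt (Rabs y) (CV_radius coef))
    by (eapply Rbar_lt_le_trans; [|apply CV_radius_coef]; exact Hy).
  change (plus (PSeries coef y) (coef 0 * y ^ 0)) with (PSeries coef y + 0 * 1).
  rewrite Rmult_0_l, Rplus_0_r.
  apply Series_correct, ex_series_Rabs, CV_disk_inside, Hrad.
Qed.

Lemma X_1 : X 1 = 27 / 4.
Proof. unfold X. field. Qed.

Lemma X_nonneg (u : R) : 0 <= u -> 0 <= X u.
Proof.
  intros Hu. unfold X. apply Rmult_le_pos.
  - apply Rmult_le_pos; [lra | now apply pow_le].
  - apply Rlt_le, Rinv_0_lt_compat, pow2_gt_0. generalize (pow_le u 3 Hu). lra.
Qed.

Lemma is_series_coef_X (u : R) : -11 / 20 < u <= 1 ->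
  is_series (fun n => coef (S n) * X u ^ S n) (closed_form u).
Proof.
  assert (Hlt : forall u, -11 / 20 < u < 1 ->
                  is_series (fun n => coef (S n) * X u ^ S n) (closed_form u)).
  { intros v Hv. rewrite <- PSeries_coef_X by exact Hv. apply is_series_coef_shift, Rabs_X_lt, Hv. }
  intros Hu. destruct (Req_dec u 1) as [->|Hu1]; [|apply Hlt; lra].
  apply (is_series_left_endpoint (fun u n => coef (S n) * X u ^ S n) closed_form 0 1);
    [lra | | | |].
  - intros n. apply ex_derive_continuous_R, ex_derive_scal, ex_derive_pow.
    exists (X' 1). apply is_derive_X. lra.
  - apply ex_derive_continuous_R. exists (closed_form' 1). apply is_derive_closed_form. lra.
  - intros v n Hv. assert (HX := Rabs_X_lt v ltac:(lra)). apply Rabs_def2 in HX.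
    assert (HX0 := X_nonneg v ltac:(lra)). rewrite X_1.
    assert (Hc := coef_nonneg (S n)). split.
    + apply Rmult_le_pos; [exact Hc | apply pow_le; lra].
    + apply Rmult_le_compat_l; [exact Hc | apply pow_incr; lra].
  - intros v Hv. apply Hlt. lra.
Qed.

(** * Specialization to Fibonacci and Lucas numbers *)

Lemma X_sign_ratio (c e : R) : 1 <= c -> (e = 1 \/ e = -1) -> c + e <> 0 ->
  X (e / c) = 27 * e * c ^ 3 / (c ^ 3 + e) ^ 2.
Proof.
  intros Hc He Hce. unfold X.
  assert (Hc3 : 1 <= c ^ 3) by (rewrite <- (pow1 3); apply pow_incr; lra).
  assert (c ^ 3 + e <> 0) by (destruct He; subst; nra).
  destruct He; subst; field; lra.
Qed.

Lemma closed_form_sign_ratio (c e : R) : 1 <= c -> (e = 1 \/ e = -1) -> c + e <> 0 ->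
  closed_form (e / c)
  = 6 * atan (sqrt 3 / (2 * c - e)) ^ 2 - 1 / 2 * ln ((c ^ 3 + e) / (c + e) ^ 3) ^ 2.
Proof.
  intros Hc He Hce. unfold closed_form, psi, Psi, ell.
  assert (Hs := sqrt3_sqrt3). assert (Hp := sqrt3_pos).
  assert (Hatan : 3 * (e / c) / (sqrt 3 * (2 - e / c)) = e * (sqrt 3 / (2 * c - e))).
  { set (s := sqrt 3) in *. rewrite <- Hs. destruct He; subst; field; lra. }
  assert (Hlog : (1 - e / c + (e / c) ^ 2) / (1 + e / c) ^ 2 = (c ^ 3 + e) / (c + e) ^ 3)
    by (destruct He; subst; field; lra).
  rewrite Hatan, Hlog.
  replace (2 * (sqrt 3 * atan (e * (sqrt 3 / (2 * c - e)))) ^ 2)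
    with (6 * atan (sqrt 3 / (2 * c - e)) ^ 2); [reflexivity|].
  destruct He; subst.
  - rewrite Rmult_1_l. replace 6 with (2 * (sqrt 3 * sqrt 3)) by lra. ring.
  - replace (-1 * _) with (- (sqrt 3 / (2 * c - -1))) by ring.
    rewrite atan_opp. replace 6 with (2 * (sqrt 3 * sqrt 3)) by lra. ring.
Qed.

Lemma is_series_sign_ratio (c e : R) :
  1 <= c -> (e = 1 \/ e = -1) -> (e = -1 -> 20 / 11 < c) ->
  is_series
    (fun n => (27 * e * c ^ 3 / (c ^ 3 + e) ^ 2) ^ S n
              / (INR (S n) ^ 2 * Binomial.C (3 * S n) (S n)))
    (6 * atan (sqrt 3 / (2 * c - e)) ^ 2 - 1 / 2 * ln ((c ^ 3 + e) / (c + e) ^ 3) ^ 2).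
Proof.
  intros Hc He Hbig.
  assert (Hce : c + e <> 0) by (destruct He as [He|He]; [|specialize (Hbig He)]; lra).
  assert (Hu : -11 / 20 < e / c <= 1).
  { assert (Hci : 0 < / c <= 1)
      by (split; [apply Rinv_0_lt_compat | rewrite <- Rinv_1; apply Rinv_le_contravar]; lra).
    unfold Rdiv. destruct He as [He|He]; rewrite He; [lra|].
    specialize (Hbig He). assert (/ c < 11 / 20); [|lra].
    replace (11 / 20) with (/ (20 / 11)) by field. apply Rinv_lt_contravar; nra. }
  rewrite <- X_sign_ratio, <- closed_form_sign_ratio by assumption.
  eapply is_series_ext; [|exact (is_series_coef_X _ Hu)].
  intros n. R_eq. unfold coef, binom3, Rdiv. ring.
Qed.

Definition beta : R := (1 - sqrt 5) / 2.

Lemma sqrt5_sqrt5 : sqrt 5 * sqrt 5 = 5.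
Proof. apply sqrt_sqrt; lra. Qed.

Lemma sqrt5_ge_2 : 2 <= sqrt 5.
Proof. rewrite <- (sqrt_square 2) by lra. apply sqrt_le_1_alt. lra. Qed.

Lemma alpha_gt_1 : 1 < alpha.
Proof. unfold alpha. generalize sqrt5_ge_2. lra. Qed.

Lemma alpha_mul_beta : alpha * beta = -1.
Proof. unfold alpha, beta. generalize sqrt5_sqrt5. nra. Qed.

Lemma alpha_sq : alpha ^ 2 = alpha + 1.
Proof. unfold alpha. generalize sqrt5_sqrt5. nra. Qed.

Lemma beta_sq : beta ^ 2 = beta + 1.
Proof. unfold beta. generalize sqrt5_sqrt5. nra. Qed.

Lemma binet (x : nat -> R) (p q : R) :
  x 0%nat = p + q -> x 1%nat = p * alpha + q * beta ->
  (forall n, x (S (S n)) = x (S n) + x n) ->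
  forall n, x n = p * alpha ^ n + q * beta ^ n.
Proof.
  intros H0 H1 Hrec n.
  enough (x n = p * alpha ^ n + q * beta ^ n /\ x (S n) = p * alpha ^ S n + q * beta ^ S n)
    by tauto.
  induction n as [|n [IH IH']]; [simpl; split; lra|].
  split; [exact IH'|]. rewrite Hrec, IH, IH'.
  replace (S (S n)) with (n + 2)%nat by lia. rewrite !pow_add, alpha_sq, beta_sq. simpl. ring.
Qed.

Lemma lucas_binet (n : nat) : INR (lucas n) = alpha ^ n + beta ^ n.
Proof.
  rewrite (binet (fun n => INR (lucas n)) 1 1); [ring | simpl; lra | |].
  - simpl. unfold alpha, beta. field.
  - intros m. simpl lucas. rewrite plus_INR. reflexivity.
Qed.

Lemma fib_binet (n : nat) : sqrt 5 * INR (fib n) = alpha ^ n - beta ^ n.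
Proof.
  rewrite (binet (fun n => sqrt 5 * INR (fib n)) 1 (-1)); [ring | simpl; lra | |].
  - simpl. unfold alpha, beta. field.
  - intros m. change (fib (S (S m))) with (fib (S m) + fib m)%nat. rewrite plus_INR. ring.
Qed.

Lemma cbrt_pos (t : R) : 0 < t -> 0 < cbrt t.
Proof. intros Ht. unfold cbrt. destruct (Rlt_dec 0 t); [apply exp_pos | lra]. Qed.

Lemma cbrt_cube (t : R) : 0 < t -> cbrt t ^ 3 = t.
Proof.
  intros Ht. rewrite <- Rpower_pow by now apply cbrt_pos.
  unfold cbrt. destruct (Rlt_dec 0 t); [|lra].
  rewrite Rpower_mult. replace (1 / 3 * INR 3) with 1 by (simpl; field). now apply Rpower_1.
Qed.

Lemma cbrt_alpha_pow_cube (r : nat) : cbrt (alpha ^ (2 * r)) ^ 3 = (alpha ^ r) ^ 2.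
Proof.
  rewrite cbrt_cube by (apply pow_lt; generalize alpha_gt_1; lra).
  now rewrite Nat.mul_comm, pow_mult.
Qed.

Lemma alpha_pow_ge_1 (r : nat) : 1 <= alpha ^ r.
Proof. rewrite <- (pow1 r). apply pow_incr. generalize alpha_gt_1. lra. Qed.

Lemma cbrt_alpha_pow_ge_1 (r : nat) : 1 <= cbrt (alpha ^ (2 * r)).
Proof.
  apply Rnot_lt_le. intros Hlt.
  assert (Hc := cbrt_alpha_pow_cube r). assert (HA := alpha_pow_ge_1 r).
  assert (0 < cbrt (alpha ^ (2 * r))) by (apply cbrt_pos, pow_lt; generalize alpha_gt_1; lra).
  assert (cbrt (alpha ^ (2 * r)) ^ 3 < 1) by (simpl; nra).
  nra.
Qed.

Lemma cbrt_alpha_pow_gt (r : nat) : (2 <= r)%nat -> 20 / 11 < cbrt (alpha ^ (2 * r)).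
Proof.
  intros Hr. apply Rnot_le_lt. intros Hle.
  assert (Hc := cbrt_alpha_pow_cube r).
  assert (HA : alpha ^ 2 <= alpha ^ r) by (apply Rle_pow; [generalize alpha_gt_1; lra | exact Hr]).
  assert (5 / 2 <= alpha ^ 2).
  { rewrite alpha_sq. unfold alpha. generalize sqrt5_ge_2. lra. }
  assert (cbrt (alpha ^ (2 * r)) ^ 3 <= (20 / 11) ^ 3)
    by (apply pow_incr; split; [apply Rlt_le, cbrt_pos, pow_lt; generalize alpha_gt_1 |]; lra).
  nra.
Qed.

Lemma pow_mul_div_pow (s q L D : R) (k r : nat) : L <> 0 -> D <> 0 ->
  s ^ (k * r) * q ^ k / (D * L ^ (2 * k)) = (s ^ r * q / L ^ 2) ^ k / D.
Proof.
  intros HL HD. rewrite Nat.mul_comm, pow_mult, (pow_mult L 2 k).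
  unfold Rdiv. rewrite !Rpow_mult_distr, pow_inv.
  assert ((L ^ 2) ^ k <> 0) by (apply pow_nonzero, pow_nonzero, HL).
  field. auto.
Qed.

Lemma neg1_pow_cases (r : nat) : (-1) ^ r = 1 \/ (-1) ^ r = -1.
Proof. induction r as [|r [IH|IH]]; simpl; rewrite ?IH; lra. Qed.

Lemma coef_denom_neq0 (n : nat) : INR (S n) ^ 2 * Binomial.C (3 * S n) (S n) <> 0.
Proof. apply Rgt_not_eq, coef_denom_pos. Qed.

Lemma is_series_fib (r : nat) : r <> 0%nat ->
   is_series
     (fun n : nat => let k := S n in
        (-1) ^ (k * (r - 1)) * (27 / 5) ^ k
        / (INR k ^ 2 * Binomial.C (3 * k) k * INR (fib r) ^ (2 * k)))
     (6 * (atan (sqrt 3 / (2 * cbrt (alpha ^ (2 * r)) + (-1) ^ r))) ^ 2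
      - 1 / 2 * (ln (sqrt 5 * alpha ^ r * INR (fib r)
                     / (cbrt (alpha ^ (2 * r)) - (-1) ^ r) ^ 3)) ^ 2).
Proof.
  intros Hr0.
  assert (Hc3 := cbrt_alpha_pow_cube r). assert (Hc1 := cbrt_alpha_pow_ge_1 r).
  assert (HA : 1 < alpha ^ r) by (apply Rlt_pow_R1; [apply alpha_gt_1 | lia]).
  assert (Hsign : (-1) ^ (r - 1) = - (-1) ^ r)
    by (destruct r as [|r]; [lia|]; rewrite Nat.sub_succ, Nat.sub_0_r; simpl; ring).
  set (c := cbrt (alpha ^ (2 * r))) in *. set (A := alpha ^ r) in *.
  set (e := - (-1) ^ r) in Hsign.
  assert (HF : sqrt 5 * INR (fib r) * A = A ^ 2 + e).
  { unfold A, e. rewrite fib_binet, <- alpha_mul_beta, Rpow_mult_distr. ring. }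
  assert (He : e = 1 \/ e = -1) by (unfold e; destruct (neg1_pow_cases r) as [->| ->]; lra).
  assert (Hbig : e = -1 -> 20 / 11 < c).
  { intros He1. destruct r as [|[|r]]; [lia | unfold e in He1; simpl in He1; lra|].
    apply cbrt_alpha_pow_gt. lia. }
  assert (HF0 : INR (fib r) <> 0)
    by (intros Hz; rewrite Hz in HF; destruct He as [He|He]; rewrite He in HF; nra).
  replace (2 * c + (-1) ^ r) with (2 * c - e) by (unfold e; ring).
  replace (c - (-1) ^ r) with (c + e) by (unfold e; ring).
  replace (sqrt 5 * A * INR (fib r)) with (c ^ 3 + e) by (R_eq; rewrite Hc3, <- HF; ring).
  eapply is_series_ext; [|exact (is_series_sign_ratio c e Hc1 He Hbig)].
  intros n. cbv zeta. rewrite pow_mul_div_pow by (auto using coef_denom_neq0).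
  f_equal. f_equal. rewrite Hsign, Hc3, <- HF.
  replace ((sqrt 5 * INR (fib r) * A) ^ 2) with (sqrt 5 * sqrt 5 * INR (fib r) ^ 2 * A ^ 2)
    by ring.
  rewrite sqrt5_sqrt5. field. split; [auto | lra].
Qed.

Lemma is_series_lucas (r : nat) : r <> 1%nat ->
   is_series
     (fun n : nat => let k := S n in
        (-1) ^ (k * r) * 27 ^ k
        / (INR k ^ 2 * Binomial.C (3 * k) k * INR (lucas r) ^ (2 * k)))
     (6 * (atan (sqrt 3 / (2 * cbrt (alpha ^ (2 * r)) - (-1) ^ r))) ^ 2
      - 1 / 2 * (ln (alpha ^ r * INR (lucas r)
                     / (cbrt (alpha ^ (2 * r)) + (-1) ^ r) ^ 3)) ^ 2).
Proof.
  intros Hr1.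
  assert (Hc3 := cbrt_alpha_pow_cube r). assert (Hc1 := cbrt_alpha_pow_ge_1 r).
  assert (HA := alpha_pow_ge_1 r).
  set (c := cbrt (alpha ^ (2 * r))) in *. set (A := alpha ^ r) in *.
  set (e := (-1) ^ r).
  assert (HL : INR (lucas r) * A = A ^ 2 + e).
  { unfold A, e. rewrite lucas_binet, <- alpha_mul_beta, Rpow_mult_distr. ring. }
  assert (He : e = 1 \/ e = -1) by apply neg1_pow_cases.
  assert (Hbig : e = -1 -> 20 / 11 < c).
  { intros He1. destruct r as [|[|r]]; [unfold e in He1; simpl in He1; lra | lia|].
    apply cbrt_alpha_pow_gt. lia. }
  assert (HAe : 0 < A ^ 2 + e)
    by (destruct He as [He| He]; [|specialize (Hbig He)]; rewrite He; nra).
  assert (HL0 : INR (lucas r) <> 0) by (intros Hz; rewrite Hz in HL; lra).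
  replace (A * INR (lucas r)) with (c ^ 3 + e) by (R_eq; rewrite Hc3, <- HL; ring).
  eapply is_series_ext; [|exact (is_series_sign_ratio c e Hc1 He Hbig)].
  intros n. cbv zeta. rewrite pow_mul_div_pow by (auto using coef_denom_neq0).
  f_equal. f_equal. fold e. rewrite Hc3, <- HL. field. split; [auto | lra].
Qed.

Theorem theorem1 (r : nat) :
  (r <> 0%nat ->
   is_series
     (fun n : nat => let k := S n in
        (-1) ^ (k * (r - 1)) * (27 / 5) ^ k
        / (INR k ^ 2 * Binomial.C (3 * k) k * INR (fib r) ^ (2 * k)))
     (6 * (atan (sqrt 3 / (2 * cbrt (alpha ^ (2 * r)) + (-1) ^ r))) ^ 2
      - 1 / 2 * (ln (sqrt 5 * alpha ^ r * INR (fib r)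
                     / (cbrt (alpha ^ (2 * r)) - (-1) ^ r) ^ 3)) ^ 2)) /\
  (r <> 1%nat ->
   is_series
     (fun n : nat => let k := S n in
        (-1) ^ (k * r) * 27 ^ k
        / (INR k ^ 2 * Binomial.C (3 * k) k * INR (lucas r) ^ (2 * k)))
     (6 * (atan (sqrt 3 / (2 * cbrt (alpha ^ (2 * r)) - (-1) ^ r))) ^ 2
      - 1 / 2 * (ln (alpha ^ r * INR (lucas r)
                     / (cbrt (alpha ^ (2 * r)) + (-1) ^ r) ^ 3)) ^ 2)).
Proof. split; [apply is_series_fib | apply is_series_lucas]. Qed.
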